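(* Let $X$ be a collectionwise normal Tychonoff space containing a non-trivial convergent sequence. If $F(X)$ has a $\mathfrak{G}$-base, then $X$ is $\aleph_1$-compact. *)

From Stdlib Require Import Reals List Classical ClassicalEpsilon.
Import ListNotations.
Open Scope R_scope.

Set Implicit Arguments.

Definition is_topology (T : Type) (op : (T -> Prop) -> Prop) : Prop :=
  op (fun _ => True) /\
  (forall U V, op U -> op V -> op (fun x => U x /\ V x)) /\
  (forall (I : Type) (U : I -> T -> Prop),
      (forall i, op (U i)) -> op (fun x => exists i, U i x)).

Definition closed (T : Type) (op : (T -> Prop) -> Prop) (A : T -> Prop) : Prop :=
  op (fun x => ~ A x).

Definition subset (T : Type) (A B : T -> Prop) : Prop := forall x, A x -> B x.

Definition T1 (T : Type) (op : (T -> Prop) -> Prop) : Prop :=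
  forall x y : T, x <> y -> exists W, op W /\ W y /\ ~ W x.

Definition continuous_real (T : Type) (op : (T -> Prop) -> Prop) (f : T -> R) : Prop :=
  forall x eps, 0 < eps ->
    exists W, op W /\ W x /\ forall z, W z -> Rabs (f z - f x) < eps.

Definition tychonoff (T : Type) (op : (T -> Prop) -> Prop) : Prop :=
  T1 op /\
  forall (A : T -> Prop) (x : T), closed op A -> ~ A x ->
    exists f : T -> R, continuous_real op f /\
      (forall z, 0 <= f z <= 1) /\ f x = 0 /\ (forall a, A a -> f a = 1).

Definition discrete_family (T : Type) (op : (T -> Prop) -> Prop)
    (I : Type) (F : I -> T -> Prop) : Prop :=
  forall x, exists W, op W /\ W x /\
    forall i j, (exists z, W z /\ F i z) -> (exists z, W z /\ F j z) -> i = j.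

Definition collectionwise_normal (T : Type) (op : (T -> Prop) -> Prop) : Prop :=
  T1 op /\
  forall (I : Type) (F : I -> T -> Prop),
    (forall i, closed op (F i)) -> discrete_family op F ->
    exists V : I -> T -> Prop,
      (forall i, op (V i)) /\ (forall i, subset (F i) (V i)) /\ discrete_family op V.

Definition converges (T : Type) (op : (T -> Prop) -> Prop) (s : nat -> T) (p : T) : Prop :=
  forall W, op W -> W p -> exists N, forall n, (N <= n)%nat -> W (s n).

Definition has_nontrivial_convergent_seq (T : Type) (op : (T -> Prop) -> Prop) : Prop :=
  exists (s : nat -> T) (p : T),
    (forall m n, s m = s n -> m = n) /\ (forall n, s n <> p) /\ converges op s p.

Definition countable (T : Type) (A : T -> Prop) : Prop :=
  exists f : T -> nat, forall a b, A a -> A b -> f a = f b -> a = b.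

Definition accumulation_point (T : Type) (op : (T -> Prop) -> Prop) (A : T -> Prop) (p : T) : Prop :=
  forall W, op W -> W p -> exists z, W z /\ A z /\ z <> p.

Definition aleph1_compact (T : Type) (op : (T -> Prop) -> Prop) : Prop :=
  forall A : T -> Prop, ~ countable A -> exists p, accumulation_point op A p.

Section FreeGroup.
Variable X : Type.

Definition letter := (X * bool)%type.

Definition cancelsP (a b : letter) : Prop := fst a = fst b /\ snd a <> snd b.

Fixpoint reduced (w : list letter) : Prop :=
  match w with
  | a :: ((b :: _) as w') => ~ cancelsP a b /\ reduced w'
  | _ => True
  end.

Definition push (a : letter) (w : list letter) : list letter :=
  match w with
  | b :: w' => if excluded_middle_informative (cancelsP a b) then w' else a :: w
  | nil => [a]
  end.

Definition reduce (w : list letter) : list letter := fold_right push nil w.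

Lemma push_reduced a w : reduced w -> reduced (push a w).
Proof.
  destruct w as [|b w']; simpl; [tauto|].
  intro H. destruct (excluded_middle_informative (cancelsP a b)) as [Hc|Hc].
  - destruct w'; simpl in *; tauto.
  - simpl. split; assumption.
Qed.

Lemma reduce_reduced w : reduced (reduce w).
Proof.
  induction w as [|a w IH]; simpl; [exact I|]. apply push_reduced, IH.
Qed.

Definition FA : Type := { w : list letter | reduced w }.

Definition FA_one : FA := exist _ nil I.

Definition FA_mul (u v : FA) : FA :=
  exist _ (reduce (proj1_sig u ++ proj1_sig v)) (reduce_reduced _).

Definition flip (a : letter) : letter := (fst a, negb (snd a)).

Definition FA_inv (u : FA) : FA :=
  exist _ (reduce (rev (map flip (proj1_sig u)))) (reduce_reduced _).

Definition FA_of (x : X) : FA := exist _ [(x, true)] I.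

End FreeGroup.

Definition is_group_topology (X : Type) (op : (FA X -> Prop) -> Prop) : Prop :=
  is_topology op /\
  (forall a b W, op W -> W (FA_mul a b) ->
     exists U V, op U /\ op V /\ U a /\ V b /\
       forall u v, U u -> V v -> W (FA_mul u v)) /\
  (forall W, op W -> op (fun g => W (FA_inv g))).

(** Neighbourhoods of the identity in the (Markov) free topological group F(X):
    the topology of F(X) is the finest group topology on FA(X) making
    X -> FA(X) continuous, i.e. the supremum of all such group topologies.
    Since this family is closed under finite suprema, a set is a
    neighbourhood of e in F(X) iff it is a neighbourhood of e in one of them. *)
Definition free_nbhd_one (X : Type) (tau : (X -> Prop) -> Prop) (U : FA X -> Prop) : Prop :=
  exists op : (FA X -> Prop) -> Prop,
    is_group_topology op /\
    (forall W, op W -> tau (fun x => W (FA_of x))) /\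
    exists W, op W /\ W (FA_one X) /\ subset W U.

Definition free_group_has_G_base (X : Type) (tau : (X -> Prop) -> Prop) : Prop :=
  exists U : (nat -> nat) -> FA X -> Prop,
    (forall alpha, free_nbhd_one tau (U alpha)) /\
    (forall alpha beta, (forall n, (alpha n <= beta n)%nat) -> subset (U beta) (U alpha)) /\
    (forall V, free_nbhd_one tau V -> exists alpha, subset (U alpha) V).

(* Suppose [A] is uncountable and closed discrete, and let [U al] ([al] in [N^N]) be a
   G-base at the identity of F(X).  For [a] in [A] the conjugates [a^-1 p^-1 s_m a] converge
   to the identity, so a diagonal argument over the monotone base shows that for every [al]
   some finite prefix [sg] of [al] "captures" uncountably many [a]: some [a^-1 p^-1 s_m a]
   lies in [U be] for every [be] extending [sg].  Choosing distinct such points [b_sg] (with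
   their [m_sg]) for the countably many [sg] gives a closed discrete sequence, and
   collectionwise normality yields a continuous [u] vanishing on [{p} U {s_m}] with
   [u b_sg = / t (s m_sg)], where [t] is continuous with [t p = 0 < t (s m)].  The
   homomorphism from F(X) to the real Heisenberg group induced by [x |-> (t x, u x, 0)] is
   continuous and maps [a^-1 p^-1 y a] to a point with third coordinate [(t y - t p) * u a],
   which is [1] at every chosen conjugate, so the identity neighbourhood [|h3| < 1] contains
   no [U al]. *)

From Stdlib Require Import Reals List Classical ClassicalEpsilon Lra Lia Cantor.
From Stdlib Require Import FunctionalExtensionality PropExtensionality.
From Coquelicot Require Import Coquelicot.
From Pilot Require Import Defs.
Import ListNotations.
Open Scope R_scope.
Set Implicit Arguments.

Section Topology.
Variables (T : Type) (tau : (T -> Prop) -> Prop).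
Hypothesis Htop : is_topology tau.

Lemma open_of_local (S : T -> Prop) :
  (forall x, S x -> exists W, tau W /\ W x /\ subset W S) -> tau S.
Proof.
  destruct Htop as [_ [_ Hunion]]. intro Hloc.
  destruct (choice (fun (i : {x | S x}) W => tau W /\ W (proj1_sig i) /\ subset W S))
    as [W HW].
  { intros [x Sx]. exact (Hloc x Sx). }
  replace S with (fun y => exists i, W i y).
  - apply Hunion. intro i. apply HW.
  - apply functional_extensionality; intro y; apply propositional_extensionality; split.
    + intros [i Wy]. exact (proj2 (proj2 (HW i)) y Wy).
    + intro Sy. exists (exist _ y Sy). apply HW.
Qed.

Lemma open_inter (U V : T -> Prop) : tau U -> tau V -> tau (fun x => U x /\ V x).
Proof. destruct Htop as [_ [Hinter _]]. auto. Qed.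

Lemma open_fin_inter (x : T) (Q : nat -> T -> Prop) (N : nat) :
  (forall m, (m < N)%nat -> exists W, tau W /\ W x /\ subset W (Q m)) ->
  exists W, tau W /\ W x /\ forall z, W z -> forall m, (m < N)%nat -> Q m z.
Proof.
  induction N as [|N IH]; intro HQ.
  - exists (fun _ => True). split; [apply Htop|]. split; [exact I|]. intros; lia.
  - destruct IH as [W1 [HW1 [W1x W1Q]]]. { intros m Hm. apply HQ. lia. }
    destruct (HQ N) as [W2 [HW2 [W2x W2Q]]]; [lia|].
    exists (fun z => W1 z /\ W2 z). split; [apply open_inter; auto|]. split; [auto|].
    intros z [W1z W2z] m Hm. destruct (Nat.eq_dec m N) as [->|Hne]; auto.
    apply W1Q; auto; lia.
Qed.

Lemma closed_compl (S : T -> Prop) : tau S -> closed tau (fun x => ~ S x).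
Proof.
  intro HS. apply open_of_local. intros x Hx.
  exists S. split; [exact HS|]. split; [exact (NNPP _ Hx)|]. intros z Sz Hz. exact (Hz Sz).
Qed.

Lemma closed_eq (b : T) : T1 tau -> closed tau (fun x => x = b).
Proof.
  intro HT1. apply open_of_local. intros x Hx.
  destruct (HT1 b x) as [W [HW [Wx Wb]]]. { intros ->. apply Hx. reflexivity. }
  exists W. split; [exact HW|]. split; [exact Wx|]. intros z Wz ->. exact (Wb Wz).
Qed.

Lemma discrete_family_sub (I : Type) (F G : I -> T -> Prop) :
  (forall i, subset (F i) (G i)) -> discrete_family tau G -> discrete_family tau F.
Proof.
  intros FG HG x. destruct (HG x) as [W [HW [Wx HWG]]].
  exists W. split; [exact HW|]. split; [exact Wx|].
  intros i j [z [Wz Fz]] [z' [Wz' Fz']].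
  apply HWG; [exists z | exists z']; split; auto; apply FG; assumption.
Qed.

Lemma discrete_family_points (A : T -> Prop) (I : Type) (b : I -> T) :
  (forall x, exists W, tau W /\ W x /\ forall z, W z -> A z -> z = x) ->
  (forall i, A (b i)) -> (forall i j, b i = b j -> i = j) ->
  discrete_family tau (fun i x => x = b i).
Proof.
  intros Hiso HA Hinj x. destruct (Hiso x) as [W [HW [Wx HWA]]].
  exists W. split; [exact HW|]. split; [exact Wx|].
  intros i j [z [Wz ->]] [z' [Wz' ->]].
  apply Hinj. rewrite (HWA _ Wz (HA i)), (HWA _ Wz' (HA j)). reflexivity.
Qed.

Lemma isolated_of_no_accumulation (A : T -> Prop) :
  ~ (exists p, accumulation_point tau A p) ->
  forall x, exists W, tau W /\ W x /\ forall z, W z -> A z -> z = x.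
Proof.
  intros Hno x. apply NNPP. intro Hx. apply Hno. exists x. intros W HW Wx.
  apply NNPP. intro HWx. apply Hx. exists W. split; [exact HW|]. split; [exact Wx|].
  intros z Wz Az. apply NNPP. intro Hzx. apply HWx. exists z. auto.
Qed.

Lemma continuous_real_const (c : R) : continuous_real tau (fun _ => c).
Proof.
  intros x e He. exists (fun _ => True). split; [apply Htop|]. split; [exact I|].
  intros z _. rewrite Rminus_diag, Rabs_R0. exact He.
Qed.

Lemma continuous_real_affine (f : T -> R) (a b : R) :
  continuous_real tau f -> continuous_real tau (fun x => a * f x + b).
Proof.
  intros Hf x e He.
  assert (Ha : 0 < Rabs a + 1) by (pose proof (Rabs_pos a); lra).
  destruct (Hf x (e / (Rabs a + 1))) as [W [HW [Wx Hfz]]].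
  { apply Rdiv_lt_0_compat; assumption. }
  exists W. split; [exact HW|]. split; [exact Wx|]. intros z Wz.
  replace (a * f z + b - (a * f x + b)) with (a * (f z - f x)) by ring.
  rewrite Rabs_mult.
  assert (Hd : Rabs (f z - f x) * (Rabs a + 1) < e).
  { specialize (Hfz z Wz). apply Rmult_lt_compat_r with (r := Rabs a + 1) in Hfz; [|exact Ha].
    unfold Rdiv in Hfz. rewrite Rmult_assoc, Rinv_l, Rmult_1_r in Hfz by lra. exact Hfz. }
  pose proof (Rabs_pos a). pose proof (Rabs_pos (f z - f x)). nra.
Qed.

Definition seq_and_limit (s : nat -> T) (p : T) (x : T) : Prop :=
  x = p \/ exists m, x = s m.

Hypothesis Hty : tychonoff tau.

Lemma tychonoff_hausdorff (x y : T) : x <> y ->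
  exists U V, tau U /\ tau V /\ U x /\ V y /\ forall z, U z -> V z -> False.
Proof.
  intro Hxy. destruct Hty as [HT1 Hcr].
  destruct (Hcr (fun z => z = y) x (closed_eq y HT1) Hxy) as [f [Hf [_ [fx fy]]]].
  specialize (fy y eq_refl).
  destruct (Hf x (1/2)) as [U [HU [Ux HUf]]]; [lra|].
  destruct (Hf y (1/2)) as [V [HV [Vy HVf]]]; [lra|].
  exists U, V. do 4 (split; [assumption|]). intros z Uz Vz.
  specialize (HUf z Uz). specialize (HVf z Vz). rewrite fx in HUf. rewrite fy in HVf.
  apply Rabs_def2 in HUf. apply Rabs_def2 in HVf. lra.
Qed.

Lemma closed_seq_and_limit (s : nat -> T) (p : T) :
  converges tau s p -> closed tau (seq_and_limit s p).
Proof.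
  intro Hconv. apply open_of_local. intros q Hq.
  destruct (@tychonoff_hausdorff p q) as [U [V [HU [HV [Up [Vq HUV]]]]]].
  { intros <-. apply Hq. left. reflexivity. }
  destruct (Hconv U HU Up) as [N HN].
  destruct (@open_fin_inter q (fun m z => z <> s m) N) as [W [HW [Wq HWs]]].
  { intros m _. exists (fun z => z <> s m). split; [exact (closed_eq (s m) (proj1 Hty))|].
    split; [intros ->; apply Hq; right; eauto|]. intros z Hz. exact Hz. }
  exists (fun z => V z /\ W z). split; [apply open_inter; assumption|]. split; [auto|].
  intros z [Vz Wz] [->|[m ->]].
  - exact (HUV p Up Vz).
  - destruct (Nat.lt_ge_cases m N) as [Hm|Hm].
    + exact (HWs _ Wz m Hm eq_refl).
    + exact (HUV _ (HN m Hm) Vz).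
Qed.

Lemma tychonoff_bump (G : T -> Prop) (x : T) (c : R) : tau G -> G x ->
  exists g, continuous_real tau g /\ g x = c /\ forall z, ~ G z -> g z = 0.
Proof.
  intros HG Gx. destruct Hty as [_ Hcr].
  destruct (Hcr (fun z => ~ G z) x (closed_compl HG) (fun nGx => nGx Gx))
    as [f [Hf [_ [fx f1]]]].
  exists (fun z => - c * f z + c). split; [apply continuous_real_affine; exact Hf|].
  split; [rewrite fx; ring|]. intros z Gz. rewrite (f1 z Gz). ring.
Qed.

(* Meaningful when at most one [g i] is nonzero at each point. *)
Definition discrete_sum (I : Type) (g : I -> T -> R) (x : T) : R :=
  match excluded_middle_informative (exists i, g i x <> 0) with
  | left Hx => g (proj1_sig (constructive_indefinite_description _ Hx)) x
  | right _ => 0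
  end.

Lemma discrete_sum_eq0 (I : Type) (g : I -> T -> R) (x : T) :
  (forall i, g i x = 0) -> discrete_sum g x = 0.
Proof.
  intro H0. unfold discrete_sum.
  destruct (excluded_middle_informative _) as [[i Hi]|_]; [|reflexivity].
  exfalso. exact (Hi (H0 i)).
Qed.

Lemma discrete_sum_eq (I : Type) (g : I -> T -> R) (x : T) (i : I) :
  (forall j, j <> i -> g j x = 0) -> discrete_sum g x = g i x.
Proof.
  intro H0. unfold discrete_sum. destruct (excluded_middle_informative _) as [Hx|Hx].
  - destruct (constructive_indefinite_description _ Hx) as [j Hj]; simpl.
    destruct (classic (j = i)) as [->|Hji]; [reflexivity|]. exfalso. exact (Hj (H0 j Hji)).
  - destruct (classic (g i x = 0)) as [->|Hi]; [reflexivity|].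
    exfalso. apply Hx. exists i. exact Hi.
Qed.

Lemma continuous_real_discrete_sum (I : Type) (g : I -> T -> R) :
  (forall i, continuous_real tau (g i)) ->
  discrete_family tau (fun i x => g i x <> 0) ->
  continuous_real tau (discrete_sum g).
Proof.
  intros Hg Hdisc x e He. destruct (Hdisc x) as [W0 [HW0 [W0x HW0g]]].
  destruct (classic (exists j z, W0 z /\ g j z <> 0)) as [[j [z0 Hz0]]|Hnone].
  - assert (Hloc : forall z, W0 z -> discrete_sum g z = g j z).
    { intros z Wz. apply discrete_sum_eq. intros i Hij.
      apply NNPP. intro Hi. apply Hij. apply HW0g; [exists z | exists z0]; auto. }
    destruct (Hg j x e He) as [W1 [HW1 [W1x HW1g]]].
    exists (fun z => W0 z /\ W1 z). split; [apply open_inter; assumption|]. split; [auto|].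
    intros z [W0z W1z]. rewrite (Hloc z W0z), (Hloc x W0x). exact (HW1g z W1z).
  - assert (Hloc : forall z, W0 z -> discrete_sum g z = 0).
    { intros z Wz. apply discrete_sum_eq0. intro i.
      apply NNPP. intro Hi. apply Hnone. exists i, z. auto. }
    exists W0. split; [exact HW0|]. split; [exact W0x|]. intros z Wz.
    rewrite (Hloc z Wz), (Hloc x W0x), Rminus_diag, Rabs_R0. exact He.
Qed.

Lemma exists_continuous_interpolation (I : Type) (b : I -> T) (lam : I -> R) (S : T -> Prop) :
  collectionwise_normal tau ->
  closed tau S -> (forall i, ~ S (b i)) -> discrete_family tau (fun i x => x = b i) ->
  exists u, continuous_real tau u /\ (forall x, S x -> u x = 0) /\ (forall i, u (b i) = lam i).
Proof.
  intros [HT1 Hcwn] HS HbS Hdisc.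
  destruct (Hcwn I (fun i x => x = b i) (fun i => closed_eq (b i) HT1) Hdisc)
    as [V [HV [HbV HVdisc]]].
  set (G := fun i x => V i x /\ ~ S x).
  assert (HG : forall i, tau (G i)) by (intro i; apply open_inter; auto).
  destruct (choice (fun i g => continuous_real tau g /\ g (b i) = lam i /\
                               forall z, ~ G i z -> g z = 0)) as [g Hg].
  { intro i. apply tychonoff_bump; auto. split; [apply HbV; reflexivity|apply HbS]. }
  assert (HgV : forall i, subset (fun x => g i x <> 0) (V i)).
  { intros i x Hx. apply NNPP. intro HVx. apply Hx. apply Hg. intros [Vx _]. auto. }
  exists (discrete_sum g). split; [|split].
  - apply continuous_real_discrete_sum; [intro i; apply Hg|].
    eapply discrete_family_sub; [exact HgV | exact HVdisc].
  - intros x Sx. apply discrete_sum_eq0. intro i. apply Hg. intros [_ HSx]. auto.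
  - intro i. rewrite (@discrete_sum_eq _ g (b i) i); [apply Hg|].
    intros j Hji. apply NNPP. intro Hj. apply Hji.
    destruct (HVdisc (b i)) as [W [_ [Wb HW]]].
    apply HW; exists (b i); split; auto; [apply HgV; exact Hj | apply HbV; reflexivity].
Qed.

End Topology.

Lemma ex_series_geom_bounded (a : nat -> R) (q : R) : 0 <= q < 1 ->
  (forall n, Rabs (a n) <= q ^ n) -> ex_series a.
Proof.
  intros Hq Ha. apply (ex_series_le a (fun n => q ^ n)); [exact Ha|].
  eexists. apply is_series_geom. rewrite Rabs_pos_eq; lra.
Qed.

Lemma Series_ge_term (a : nat -> R) (m : nat) :
  (forall n, 0 <= a n) -> ex_series a -> a m <= Series a.
Proof.
  intros Ha Hex.
  assert (Hsum : sum_f_R0 a m <= Series a).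
  { apply sum_incr; [|exact Ha]. apply is_series_Reals, Series_correct, Hex. }
  destruct m as [|m]; simpl in Hsum; [lra|]. pose proof (cond_pos_sum a m Ha). lra.
Qed.

Lemma Rabs_Series_minus_le (a b c : nat -> R) (l : R) :
  ex_series a -> ex_series b -> is_series c l ->
  (forall n, Rabs (a n - b n) <= c n) -> Rabs (Series a - Series b) <= l.
Proof.
  intros Ha Hb Hc Habc. rewrite <- Series_minus by assumption.
  assert (Hex : ex_series (fun n => Rabs (a n - b n))).
  { apply (@ex_series_le R_AbsRing R_CompleteNormedModule _ c); [|eexists; exact Hc].
    intro n. unfold norm; simpl; unfold abs; simpl. rewrite Rabs_Rabsolu. apply Habc. }
  eapply Rle_trans; [apply Series_Rabs; exact Hex|].
  rewrite <- (is_series_unique _ _ Hc). apply Series_le; [|eexists; exact Hc].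
  intro n. split; [apply Rabs_pos | apply Habc].
Qed.

(* Below [K] the difference is small; from [K] on, [(/4)^m = (/2)^m * (/2)^m] is at most
   [(/2)^K * (/2)^m]: a summable majorant either way. *)
Lemma weighted_diff_le (eta : R) (K m : nat) (a b : R) :
  0 <= eta -> 0 <= a <= 1 -> 0 <= b <= 1 -> ((m < K)%nat -> Rabs (a - b) < eta) ->
  Rabs ((/4) ^ m * a - (/4) ^ m * b) <= eta * (/4) ^ m + (/2) ^ K * (/2) ^ m.
Proof.
  intros Heta Ha Hb Hab.
  replace ((/4) ^ m * a - (/4) ^ m * b) with ((/4) ^ m * (a - b)) by ring.
  rewrite Rabs_mult, (Rabs_pos_eq ((/4) ^ m)) by (apply pow_le; lra).
  replace ((/4) ^ m) with ((/2) ^ m * (/2) ^ m)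
    by (rewrite <- Rpow_mult_distr; f_equal; field).
  pose proof (pow_lt (/2) m ltac:(lra)). pose proof (pow_lt (/2) K ltac:(lra)).
  pose proof (Rabs_pos (a - b)).
  destruct (Nat.lt_ge_cases m K) as [Hm|Hm].
  - specialize (Hab Hm). nra.
  - assert (HmK : (/2) ^ m <= (/2) ^ K).
    { replace m with (K + (m - K))%nat by lia. rewrite pow_add.
      assert ((/2) ^ (m - K) <= 1) by (rewrite <- (pow1 (m - K)); apply pow_incr; lra).
      nra. }
    assert (Rabs (a - b) <= 1) by (apply Rabs_le; lra).
    nra.
Qed.

Section WeightedSum.
Variables (T : Type) (tau : (T -> Prop) -> Prop).
Hypothesis Htop : is_topology tau.
Variable f : nat -> T -> R.
Hypothesis Hf01 : forall m z, 0 <= f m z <= 1.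
Hypothesis Hfc : forall m, continuous_real tau (f m).

Definition weighted_sum (z : T) : R := Series (fun m => (/4) ^ m * f m z).

Lemma weighted_term_bound m z : 0 <= (/4) ^ m * f m z <= (/4) ^ m.
Proof. pose proof (Hf01 m z). pose proof (pow_lt (/4) m ltac:(lra)). nra. Qed.

Lemma ex_series_weighted z : ex_series (fun m => (/4) ^ m * f m z).
Proof.
  apply ex_series_geom_bounded with (q := /4); [lra|]. intro m.
  pose proof (weighted_term_bound m z). rewrite Rabs_pos_eq; lra.
Qed.

Lemma weighted_sum_eq0 z : (forall m, f m z = 0) -> weighted_sum z = 0.
Proof.
  intro H0. unfold weighted_sum.
  rewrite (Series_ext _ (fun m => 0 * (/4) ^ m)) by (intro m; rewrite H0; ring).
  rewrite Series_scal_l. ring.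
Qed.

Lemma weighted_sum_pos z m : 0 < f m z -> 0 < weighted_sum z.
Proof.
  intro Hm. eapply Rlt_le_trans; [|apply Series_ge_term with (m := m)].
  - pose proof (pow_lt (/4) m ltac:(lra)). nra.
  - intro n. apply weighted_term_bound.
  - apply ex_series_weighted.
Qed.

Lemma continuous_weighted_sum : continuous_real tau weighted_sum.
Proof.
  intros x eps Heps.
  destruct (pow_lt_1_zero (/2) ltac:(rewrite Rabs_pos_eq; lra) (eps / 4) ltac:(lra)) as [K HK].
  specialize (HK K (le_n K)). rewrite Rabs_pos_eq in HK by (apply pow_le; lra).
  destruct (@open_fin_inter _ _ Htop x (fun m z => Rabs (f m z - f m x) < eps / 4) K)
    as [W [HW [Wx HWf]]].
  { intros m _. destruct (@Hfc m x (eps / 4)) as [W [? [? ?]]]; [lra|]. exists W. auto. }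
  exists W. split; [exact HW|]. split; [exact Wx|]. intros z Wz.
  assert (Hc : is_series (fun m => eps / 4 * (/4) ^ m + (/2) ^ K * (/2) ^ m)
                 (eps / 4 * / (1 - /4) + (/2) ^ K * / (1 - /2))).
  { apply (is_series_plus (fun m => eps / 4 * (/4) ^ m) (fun m => (/2) ^ K * (/2) ^ m)).
    - apply (is_series_scal_l (eps / 4) (fun m => (/4) ^ m)), is_series_geom.
      rewrite Rabs_pos_eq; lra.
    - apply (is_series_scal_l ((/2) ^ K) (fun m => (/2) ^ m)), is_series_geom.
      rewrite Rabs_pos_eq; lra. }
  eapply Rle_lt_trans;
    [apply (Rabs_Series_minus_le (ex_series_weighted z) (ex_series_weighted x) Hc)|lra].
  intro m. apply weighted_diff_le; [lra | apply Hf01 | apply Hf01 |].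
  intro Hm. exact (HWf z Wz m Hm).
Qed.

End WeightedSum.

Lemma exists_continuous_zero_at_limit (T : Type) (tau : (T -> Prop) -> Prop)
    (s : nat -> T) (p : T) :
  is_topology tau -> tychonoff tau -> (forall m, s m <> p) ->
  exists t, continuous_real tau t /\ t p = 0 /\ forall m, 0 < t (s m).
Proof.
  intros Htop [HT1 Hcr] Hsp.
  destruct (choice (fun m f => continuous_real tau f /\ (forall z, 0 <= f z <= 1) /\
                               f p = 0 /\ f (s m) = 1)) as [f Hf].
  { intro m. destruct (Hcr (fun x => x = s m) p (closed_eq Htop (s m) HT1))
      as [f [? [? [? Hfs]]]]; [intro E; exact (Hsp m (eq_sym E))|].
    exists f. auto. }
  exists (weighted_sum f). split; [|split].
  - apply continuous_weighted_sum; auto; intro m; apply Hf.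
  - apply weighted_sum_eq0. intro m. apply Hf.
  - intro m. apply (weighted_sum_pos f) with (m := m); [intros; apply Hf|].
    destruct (Hf m) as [_ [_ [_ ->]]]. lra.
Qed.

Lemma countable_cover (T : Type) (A : T -> Prop) (P : nat -> T -> Prop) :
  (forall n, countable (P n)) -> (forall a, A a -> exists n, P n a) -> countable A.
Proof.
  intros HP HA.
  destruct (choice (fun n (f : T -> nat) => forall a b, P n a -> P n b -> f a = f b -> a = b)
    HP) as [f Hf].
  destruct (choice (fun (a : {a | A a}) n => P n (proj1_sig a))) as [N HN].
  { intros [a Ha]. exact (HA a Ha). }
  exists (fun a => match excluded_middle_informative (A a) with
                   | left Ha => to_nat (N (exist _ a Ha), f (N (exist _ a Ha)) a)
                   | right _ => 0%nat
                   end).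
  intros a b Ha Hb.
  destruct (excluded_middle_informative (A a)) as [Ha'|]; [|contradiction].
  destruct (excluded_middle_informative (A b)) as [Hb'|]; [|contradiction].
  intro E. apply (f_equal of_nat) in E. rewrite !cancel_of_to in E. injection E as E1 E2.
  pose proof (HN (exist _ a Ha')) as Pa. pose proof (HN (exist _ b Hb')) as Pb. simpl in Pa, Pb.
  rewrite E1 in Pa, E2. exact (Hf _ a b Pa Pb E2).
Qed.

Lemma countable_eq (T : Type) (y : T) : countable (fun x => x = y).
Proof. exists (fun _ => 0%nat). intros a b -> -> _. reflexivity. Qed.

Lemma countable_In (T : Type) (L : list T) : countable (fun x => In x L).
Proof.
  apply countable_cover with (P := fun n x => nth_error L n = Some x).
  - intro n. exists (fun _ => 0%nat). intros a b Ha Hb _. rewrite Ha in Hb. injection Hb; auto.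
  - intros a Ha. apply In_nth_error. exact Ha.
Qed.

Lemma uncountable_diff (T : Type) (A S : T -> Prop) :
  ~ countable A -> countable S -> ~ countable (fun x => A x /\ ~ S x).
Proof.
  intros HA HS HAS. apply HA.
  apply countable_cover with (P := fun n => if Nat.eqb n 0 then fun x => A x /\ ~ S x else S).
  - intros [|n]; assumption.
  - intros a Ha. destruct (classic (S a)); [exists 1%nat | exists 0%nat]; simpl; auto.
Qed.

Lemma countable_seq_and_limit (T : Type) (s : nat -> T) (p : T) :
  countable (seq_and_limit s p).
Proof.
  apply countable_cover with (P := fun n x => match n with O => x = p | S m => x = s m end).
  - intros [|m]; apply countable_eq.
  - intros x [-> | [m ->]]; [exists 0%nat | exists (S m)]; reflexivity.
Qed.

Lemma exists_injective_choice (T : Type) (B : nat -> T -> Prop) :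
  (forall n, ~ countable (B n)) ->
  exists b : nat -> T, (forall n, B n (b n)) /\ (forall i j, b i = b j -> i = j).
Proof.
  intro HB.
  destruct (choice (fun (nL : nat * list T) x => B (fst nL) x /\ ~ In x (snd nL)))
    as [pick Hpick].
  { intros [n L]. apply NNPP. intro Hno. apply (HB n).
    apply countable_cover with (P := fun _ x => In x L); [intro; apply countable_In|].
    intros a Ba. exists 0%nat. apply NNPP. intro Ha. apply Hno. exists a. auto. }
  set (prev := fix prev n := match n with
                             | O => []
                             | S n' => pick (n', prev n') :: prev n'
                             end).
  exists (fun n => pick (n, prev n)). split; [intro n; apply (Hpick (n, prev n))|].
  assert (Hprev : forall i n, (i < n)%nat -> In (pick (i, prev i)) (prev n)).
  { intros i n. induction n as [|n IH]; intro Hi; [lia|]. simpl.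
    destruct (Nat.eq_dec i n) as [->|Hne]; [left; reflexivity|]. right. apply IH. lia. }
  intros i j E. destruct (Nat.lt_total i j) as [Hij|[Hij|Hij]]; [exfalso| exact Hij| exfalso].
  - apply (proj2 (Hpick (j, prev j))). simpl. rewrite <- E. apply Hprev, Hij.
  - apply (proj2 (Hpick (i, prev i))). simpl. rewrite E. apply Hprev, Hij.
Qed.

(* [f] is fuel: at most [f] entries are decoded. *)
Fixpoint decode_list (f c : nat) : list nat :=
  match f, c with
  | S f', S c' => let (x, r) := of_nat c' in x :: decode_list f' r
  | _, _ => []
  end.

Fixpoint encode_list (l : list nat) : nat :=
  match l with [] => O | x :: l' => S (to_nat (x, encode_list l')) end.

Lemma decode_encode_list (l : list nat) (f : nat) :
  (length l <= f)%nat -> decode_list f (encode_list l) = l.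
Proof.
  revert f; induction l as [|x l IH]; intros f Hf.
  - destruct f; reflexivity.
  - destruct f as [|f]; simpl in Hf; [lia|]. cbn [decode_list encode_list].
    rewrite cancel_of_to. f_equal. apply IH. lia.
Qed.

Lemma exists_enumeration_list_nat (P : list nat -> Prop) : (exists l, P l) ->
  exists e : nat -> list nat, (forall n, P (e n)) /\ forall l, P l -> exists n, e n = l.
Proof.
  intros [l0 Hl0].
  set (dec := fun n => let (f, c) := of_nat n in decode_list f c).
  exists (fun n => match excluded_middle_informative (P (dec n)) with
                   | left _ => dec n
                   | right _ => l0
                   end).
  split.
  - intro n. destruct (excluded_middle_informative _); assumption.
  - intros l Hl. exists (to_nat (length l, encode_list l)).
    assert (Hdec : dec (to_nat (length l, encode_list l)) = l).
    { unfold dec. rewrite cancel_of_to. apply decode_encode_list. lia. }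
    rewrite Hdec. destruct (excluded_middle_informative (P l)); [reflexivity|contradiction].
Qed.

Definition prefix (al : nat -> nat) (k : nat) : list nat := map al (seq 0 k).

Definition extends (sg : list nat) (be : nat -> nat) : Prop :=
  forall i, (i < length sg)%nat -> be i = nth i sg 0%nat.

Lemma extends_prefix (al be : nat -> nat) (k : nat) :
  extends (prefix al k) be <-> forall i, (i < k)%nat -> be i = al i.
Proof.
  unfold extends, prefix. rewrite length_map, length_seq.
  split; intros Hbe i Hi; rewrite Hbe by exact Hi;
    rewrite (nth_indep _ 0%nat (al 0%nat)) by (rewrite length_map, length_seq; exact Hi);
    rewrite map_nth, seq_nth by exact Hi; reflexivity.
Qed.

(* If [c k] fails to lie in [U (be k)] for some [be k] agreeing with [al] below [k], then
   [ga i := max (al i) (max_{k <= i} be k i)] dominates every [be k], and [c] cannot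
   converge into [U ga]. *)
Lemma G_base_diagonal (G : Type) (U : (nat -> nat) -> G -> Prop) (c : nat -> G) :
  (forall al be, (forall n, (al n <= be n)%nat) -> subset (U be) (U al)) ->
  (forall be, exists N, forall k, (N <= k)%nat -> U be (c k)) ->
  forall al, exists k, forall be, extends (prefix al k) be -> U be (c k).
Proof.
  intros Hmono Hconv al. apply NNPP. intro Hno.
  destruct (choice (fun k be => extends (prefix al k) be /\ ~ U be (c k))) as [be Hbe].
  { intro k. apply NNPP. intro Hk. apply Hno. exists k. intros b Hb.
    apply NNPP. intro Hnb. apply Hk. exists b. auto. }
  set (ga := fun i => Nat.max (al i) (list_max (map (fun k => be k i) (seq 0 (S i))))).
  assert (Hga : forall k i, (be k i <= ga i)%nat).
  { intros k i. unfold ga. destruct (Nat.le_gt_cases k i) as [Hki|Hki].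
    - assert (Hmax : (be k i <= list_max (map (fun k => be k i) (seq 0 (S i))))%nat).
      { pose proof (proj1 (list_max_le (map (fun k => be k i) (seq 0 (S i))) _) (le_n _)) as Hall.
        rewrite Forall_forall in Hall. apply Hall, in_map_iff. exists k.
        split; [reflexivity|]. apply in_seq. lia. }
      lia.
    - rewrite (proj1 (extends_prefix al (be k) k) (proj1 (Hbe k)) i Hki). lia. }
  destruct (Hconv ga) as [N HN].
  exact (proj2 (Hbe N) (Hmono _ _ (Hga N) _ (HN N (le_n N)))).
Qed.

(* [(a, b, c)] is the unitriangular matrix [[1, a, c], [0, 1, b], [0, 0, 1]]. *)
Definition heis : Type := (R * R * R)%type.
Definition h1 (z : heis) : R := fst (fst z).
Definition h2 (z : heis) : R := snd (fst z).
Definition h3 (z : heis) : R := snd z.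
Definition heis_mul (x y : heis) : heis :=
  (h1 x + h1 y, h2 x + h2 y, h3 x + h3 y + h1 x * h2 y).
Definition heis_inv (x : heis) : heis := (- h1 x, - h2 x, - h3 x + h1 x * h2 x).
Definition heis_one : heis := (0, 0, 0).

Lemma heis_ext (x y : heis) : h1 x = h1 y -> h2 x = h2 y -> h3 x = h3 y -> x = y.
Proof.
  destruct x as [[a b] c], y as [[a' b'] c']. unfold h1, h2, h3; simpl. intros -> -> ->.
  reflexivity.
Qed.

Ltac heis_ring := apply heis_ext; unfold heis_mul, heis_inv, heis_one, h1, h2, h3; simpl; ring.

Lemma heis_mulA x y z : heis_mul (heis_mul x y) z = heis_mul x (heis_mul y z).
Proof. heis_ring. Qed.
Lemma heis_mul1l x : heis_mul heis_one x = x.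
Proof. heis_ring. Qed.
Lemma heis_mul1r x : heis_mul x heis_one = x.
Proof. heis_ring. Qed.
Lemma heis_mulVl x : heis_mul (heis_inv x) x = heis_one.
Proof. heis_ring. Qed.
Lemma heis_mulVr x : heis_mul x (heis_inv x) = heis_one.
Proof. heis_ring. Qed.
Lemma heis_invK x : heis_inv (heis_inv x) = x.
Proof. heis_ring. Qed.
Lemma heis_invM x y : heis_inv (heis_mul x y) = heis_mul (heis_inv y) (heis_inv x).
Proof. heis_ring. Qed.
Lemma heis_inv1 : heis_inv heis_one = heis_one.
Proof. heis_ring. Qed.

Definition heis_dist (z w : heis) : R :=
  Rabs (h1 w - h1 z) + Rabs (h2 w - h2 z) + Rabs (h3 w - h3 z).

Lemma Rabs_sub_triang (x y z : R) : Rabs (z - x) <= Rabs (y - x) + Rabs (z - y).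
Proof. replace (z - x) with ((y - x) + (z - y)) by ring. apply Rabs_triang. Qed.

Lemma heis_dist_refl z : heis_dist z z = 0.
Proof. unfold heis_dist. rewrite !Rminus_diag, Rabs_R0. ring. Qed.

Lemma heis_dist_triangle x y z : heis_dist x z <= heis_dist x y + heis_dist y z.
Proof.
  unfold heis_dist.
  pose proof (Rabs_sub_triang (h1 x) (h1 y) (h1 z)).
  pose proof (Rabs_sub_triang (h2 x) (h2 y) (h2 z)).
  pose proof (Rabs_sub_triang (h3 x) (h3 y) (h3 z)). lra.
Qed.

Lemma Rabs_mul_sub_le x y a b d :
  Rabs (x - a) <= d -> Rabs (y - b) <= d -> d <= 1 ->
  Rabs (x * y - a * b) <= d * (Rabs a + Rabs b + 1).
Proof.
  intros Hx Hy Hd.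
  replace (x * y - a * b) with ((x - a) * (y - b) + (a * (y - b) + (x - a) * b)) by ring.
  pose proof (Rabs_triang ((x - a) * (y - b)) (a * (y - b) + (x - a) * b)).
  pose proof (Rabs_triang (a * (y - b)) ((x - a) * b)).
  rewrite !Rabs_mult in *.
  pose proof (Rabs_pos (x - a)). pose proof (Rabs_pos (y - b)).
  pose proof (Rabs_pos a). pose proof (Rabs_pos b).
  assert (Rabs (x - a) * Rabs (y - b) <= d * 1) by (apply Rmult_le_compat; lra).
  assert (Rabs a * Rabs (y - b) <= Rabs a * d) by (apply Rmult_le_compat_l; lra).
  assert (Rabs (x - a) * Rabs b <= d * Rabs b) by (apply Rmult_le_compat_r; lra).
  nra.
Qed.

Lemma heis_dist_mul z1 z2 w1 w2 d : d <= 1 ->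
  heis_dist z1 w1 < d -> heis_dist z2 w2 < d ->
  heis_dist (heis_mul z1 z2) (heis_mul w1 w2) < d * (3 + Rabs (h1 z1) + Rabs (h2 z2)).
Proof.
  destruct z1 as [[a1 b1] c1], z2 as [[a2 b2] c2], w1 as [[x1 y1] u1], w2 as [[x2 y2] u2].
  unfold heis_dist, heis_mul, h1, h2, h3; simpl. intros Hd Hw1 Hw2.
  pose proof (Rabs_pos (x1 - a1)). pose proof (Rabs_pos (y1 - b1)).
  pose proof (Rabs_pos (u1 - c1)). pose proof (Rabs_pos (x2 - a2)).
  pose proof (Rabs_pos (y2 - b2)). pose proof (Rabs_pos (u2 - c2)).
  pose proof (@Rabs_mul_sub_le x1 y2 a1 b2 d ltac:(lra) ltac:(lra) Hd).
  replace (x1 + x2 - (a1 + a2)) with ((x1 - a1) + (x2 - a2)) by ring.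
  replace (y1 + y2 - (b1 + b2)) with ((y1 - b1) + (y2 - b2)) by ring.
  replace (u1 + u2 + x1 * y2 - (c1 + c2 + a1 * b2))
    with ((u1 - c1) + ((u2 - c2) + (x1 * y2 - a1 * b2))) by ring.
  pose proof (Rabs_triang (x1 - a1) (x2 - a2)). pose proof (Rabs_triang (y1 - b1) (y2 - b2)).
  pose proof (Rabs_triang (u1 - c1) ((u2 - c2) + (x1 * y2 - a1 * b2))).
  pose proof (Rabs_triang (u2 - c2) (x1 * y2 - a1 * b2)).
  lra.
Qed.

Lemma heis_dist_inv z w d : d <= 1 -> heis_dist z w < d ->
  heis_dist (heis_inv z) (heis_inv w) < d * (2 + Rabs (h1 z) + Rabs (h2 z)).
Proof.
  destruct z as [[a b] c], w as [[x y] u].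
  unfold heis_dist, heis_inv, h1, h2, h3; simpl. intros Hd Hw.
  pose proof (Rabs_pos (x - a)). pose proof (Rabs_pos (y - b)). pose proof (Rabs_pos (u - c)).
  pose proof (@Rabs_mul_sub_le x y a b d ltac:(lra) ltac:(lra) Hd).
  replace (- x - - a) with (- (x - a)) by ring. replace (- y - - b) with (- (y - b)) by ring.
  replace (- u + x * y - (- c + a * b)) with (- (u - c) + (x * y - a * b)) by ring.
  rewrite !Rabs_Ropp. pose proof (Rabs_triang (- (u - c)) (x * y - a * b)).
  rewrite Rabs_Ropp in *. lra.
Qed.

Lemma exists_small_delta (e C : R) : 0 < e -> 0 < C ->
  exists d, 0 < d /\ d <= 1 /\ d * C <= e.
Proof.
  intros He HC. exists (Rmin 1 (e / C)). split; [|split].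
  - apply Rmin_glb_lt; [lra|]. apply Rdiv_lt_0_compat; assumption.
  - apply Rmin_l.
  - apply Rle_trans with (e / C * C); [|right; field; lra].
    apply Rmult_le_compat_r; [lra|apply Rmin_r].
Qed.

Section FreeGroupToHeis.
Variables (X : Type) (iota : X -> heis).

Definition letter_val (l : letter X) : heis :=
  if snd l then iota (fst l) else heis_inv (iota (fst l)).

Definition word_val (w : list (letter X)) : heis :=
  fold_right (fun l acc => heis_mul (letter_val l) acc) heis_one w.

Definition free_val (g : FA X) : heis := word_val (proj1_sig g).

Lemma word_val_push a w : word_val (push a w) = heis_mul (letter_val a) (word_val w).
Proof.
  destruct w as [|b w]; simpl; [reflexivity|].
  destruct (excluded_middle_informative (cancelsP a b)) as [[Eab Hab]|]; [|reflexivity].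
  rewrite <- heis_mulA.
  destruct a as [x [|]], b as [y [|]]; simpl in *; subst; try (exfalso; apply Hab; reflexivity);
    unfold letter_val; simpl; [rewrite heis_mulVr | rewrite heis_mulVl]; symmetry; apply heis_mul1l.
Qed.

Lemma word_val_reduce w : word_val (reduce w) = word_val w.
Proof.
  induction w as [|a w IH]; simpl; [reflexivity|]. rewrite word_val_push, IH. reflexivity.
Qed.

Lemma word_val_cat w1 w2 : word_val (w1 ++ w2) = heis_mul (word_val w1) (word_val w2).
Proof.
  induction w1 as [|a w IH]; simpl.
  - rewrite heis_mul1l. reflexivity.
  - rewrite IH, heis_mulA. reflexivity.
Qed.

Lemma word_val_rev_flip w : word_val (rev (map (@flip X) w)) = heis_inv (word_val w).
Proof.
  induction w as [|a w IH]; simpl; [symmetry; apply heis_inv1|].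
  rewrite word_val_cat, IH. simpl. rewrite heis_mul1r, heis_invM. f_equal.
  destruct a as [x [|]]; unfold letter_val; simpl; [reflexivity|]. rewrite heis_invK. reflexivity.
Qed.

Lemma free_val_mul u v : free_val (FA_mul u v) = heis_mul (free_val u) (free_val v).
Proof. unfold free_val, FA_mul; simpl. rewrite word_val_reduce, word_val_cat. reflexivity. Qed.

Lemma free_val_inv u : free_val (FA_inv u) = heis_inv (free_val u).
Proof. unfold free_val, FA_inv; simpl. rewrite word_val_reduce, word_val_rev_flip. reflexivity. Qed.

Lemma free_val_of x : free_val (FA_of x) = iota x.
Proof. apply heis_mul1r. Qed.

Definition heis_pullback (W : FA X -> Prop) : Prop :=
  forall g, W g -> exists e, 0 < e /\
    forall g', heis_dist (free_val g) (free_val g') < e -> W g'.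

Lemma heis_pullback_ball g0 d : heis_pullback (fun g => heis_dist (free_val g0) (free_val g) < d).
Proof.
  intros g Hg. exists (d - heis_dist (free_val g0) (free_val g)). split; [lra|].
  intros g' Hg'. pose proof (heis_dist_triangle (free_val g0) (free_val g) (free_val g')). lra.
Qed.

Lemma is_group_topology_heis_pullback : is_group_topology heis_pullback.
Proof.
  split; [split; [|split]|split].
  - intros g _. exists 1. split; [lra|]. auto.
  - intros U V HU HV g [Ug Vg].
    destruct (HU g Ug) as [e1 [He1 HU']], (HV g Vg) as [e2 [He2 HV']].
    exists (Rmin e1 e2). split; [apply Rmin_glb_lt; assumption|].
    intros g' Hg'. pose proof (Rmin_l e1 e2). pose proof (Rmin_r e1 e2).
    split; [apply HU' | apply HV']; lra.
  - intros I U HU g [i Ug]. destruct (HU i g Ug) as [e [He HU']].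
    exists e. split; [exact He|]. intros g' Hg'. exists i. auto.
  - intros a b W HW Wab. destruct (HW _ Wab) as [e [He HW']].
    set (C := 3 + Rabs (h1 (free_val a)) + Rabs (h2 (free_val b))).
    assert (HC : 0 < C) by (unfold C; pose proof (Rabs_pos (h1 (free_val a)));
                            pose proof (Rabs_pos (h2 (free_val b))); lra).
    destruct (exists_small_delta He HC) as [d [Hd [Hd1 HdC]]].
    exists (fun g => heis_dist (free_val a) (free_val g) < d),
           (fun g => heis_dist (free_val b) (free_val g) < d).
    split; [apply heis_pullback_ball|]. split; [apply heis_pullback_ball|].
    split; [rewrite heis_dist_refl; exact Hd|]. split; [rewrite heis_dist_refl; exact Hd|].
    intros u v Hu Hv. apply HW'. rewrite !free_val_mul.
    pose proof (heis_dist_mul Hd1 Hu Hv) as Huv. fold C in Huv. lra.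
  - intros W HW g Wg. destruct (HW _ Wg) as [e [He HW']].
    set (C := 2 + Rabs (h1 (free_val g)) + Rabs (h2 (free_val g))).
    assert (HC : 0 < C) by (unfold C; pose proof (Rabs_pos (h1 (free_val g)));
                            pose proof (Rabs_pos (h2 (free_val g))); lra).
    destruct (exists_small_delta He HC) as [d [Hd [Hd1 HdC]]].
    exists d. split; [exact Hd|]. intros g' Hg'. apply HW'. rewrite !free_val_inv.
    pose proof (heis_dist_inv Hd1 Hg') as Hinv. fold C in Hinv. lra.
Qed.

End FreeGroupToHeis.

Lemma open_heis_pullback_of (X : Type) (tau : (X -> Prop) -> Prop) (iota : X -> heis)
    (W : FA X -> Prop) :
  is_topology tau ->
  continuous_real tau (fun x => h1 (iota x)) -> continuous_real tau (fun x => h2 (iota x)) ->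
  continuous_real tau (fun x => h3 (iota x)) ->
  heis_pullback iota W -> tau (fun x => W (FA_of x)).
Proof.
  intros Htop Hc1 Hc2 Hc3 HW. apply open_of_local; [exact Htop|]. intros x Wx.
  destruct (HW _ Wx) as [e [He HWe]].
  destruct (Hc1 x (e / 3)) as [W1 [HW1 [W1x Q1]]]; [lra|].
  destruct (Hc2 x (e / 3)) as [W2 [HW2 [W2x Q2]]]; [lra|].
  destruct (Hc3 x (e / 3)) as [W3 [HW3 [W3x Q3]]]; [lra|].
  exists (fun z => W1 z /\ W2 z /\ W3 z).
  split; [repeat apply open_inter; assumption|]. split; [auto|].
  intros z [W1z [W2z W3z]]. apply HWe. rewrite !free_val_of. unfold heis_dist.
  specialize (Q1 z W1z). specialize (Q2 z W2z). specialize (Q3 z W3z). lra.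
Qed.

Lemma free_nbhd_one_h3 (X : Type) (tau : (X -> Prop) -> Prop) (iota : X -> heis) :
  is_topology tau ->
  continuous_real tau (fun x => h1 (iota x)) -> continuous_real tau (fun x => h2 (iota x)) ->
  continuous_real tau (fun x => h3 (iota x)) ->
  free_nbhd_one tau (fun g => Rabs (h3 (free_val iota g)) < 1).
Proof.
  intros Htop Hc1 Hc2 Hc3. exists (heis_pullback iota).
  split; [apply is_group_topology_heis_pullback|].
  split; [intros W; apply open_heis_pullback_of; assumption|].
  exists (fun g => Rabs (h3 (free_val iota g)) < 1). split; [|split].
  - intros g Hg. exists (1 - Rabs (h3 (free_val iota g))). split; [lra|].
    intros g' Hg'. unfold heis_dist in Hg'.
    pose proof (Rabs_sub_triang 0 (h3 (free_val iota g)) (h3 (free_val iota g'))).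
    pose proof (Rabs_pos (h1 (free_val iota g') - h1 (free_val iota g))).
    pose proof (Rabs_pos (h2 (free_val iota g') - h2 (free_val iota g))).
    rewrite !Rminus_0_r in *. lra.
  - unfold free_val, h3, heis_one; simpl. rewrite Rabs_R0. lra.
  - intros g Hg. exact Hg.
Qed.

Definition conj_ldiv (X : Type) (p a y : X) : FA X :=
  FA_mul (FA_mul (FA_mul (FA_inv (FA_of a)) (FA_inv (FA_of p))) (FA_of y)) (FA_of a).

Lemma FA_eq (X : Type) (u v : FA X) : proj1_sig u = proj1_sig v -> u = v.
Proof.
  destruct u as [u Hu], v as [v Hv]; simpl. intros ->. f_equal. apply proof_irrelevance.
Qed.

Lemma conj_ldiv_id (X : Type) (p a : X) : conj_ldiv p a p = FA_one X.
Proof.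
  apply FA_eq. unfold conj_ldiv, FA_mul, FA_inv, FA_of, FA_one, reduce, Defs.flip. cbn.
  repeat (destruct (excluded_middle_informative _) as [[_ Hc]|Hc]; cbn;
    try (exfalso; apply Hc; solve [reflexivity | split; [reflexivity|discriminate]]); clear Hc).
  all: reflexivity.
Qed.

Lemma free_nbhd_one_conj_ldiv (X : Type) (tau : (X -> Prop) -> Prop) (s : nat -> X) (p : X)
    (V : FA X -> Prop) :
  converges tau s p -> free_nbhd_one tau V ->
  forall a, exists N, forall m, (N <= m)%nat -> V (conj_ldiv p a (s m)).
Proof.
  intros Hconv [op [[_ [Hmul _]] [Hemb [W [HW [W1 HWV]]]]]] a.
  rewrite <- (conj_ldiv_id p a) in W1.
  destruct (Hmul _ _ W HW W1) as [W2 [Wa [HW2 [_ [W2g [Waa HW2a]]]]]].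
  destruct (Hmul _ _ W2 HW2 W2g) as [W3 [Wp [_ [HWp [W3g [Wpp HW3p]]]]]].
  destruct (Hconv _ (Hemb Wp HWp) Wpp) as [N HN].
  exists N. intros m Hm. apply HWV, HW2a; [apply HW3p; [exact W3g | exact (HN m Hm)] | exact Waa].
Qed.

Lemma h3_free_val_conj_ldiv (X : Type) (t u : X -> R) (p a y : X) :
  u p = 0 -> u y = 0 ->
  h3 (free_val (fun x => (t x, u x, 0)) (conj_ldiv p a y)) = (t y - t p) * u a.
Proof.
  intros Hp Hy. unfold conj_ldiv. rewrite !free_val_mul, !free_val_inv, !free_val_of.
  unfold heis_mul, heis_inv, h1, h2, h3; simpl. rewrite Hp, Hy. ring.
Qed.

Section CapturedSequence.
Variables (X : Type) (tau : (X -> Prop) -> Prop) (s : nat -> X) (p : X).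
Hypothesis Hconv : converges tau s p.
Variable U : (nat -> nat) -> FA X -> Prop.
Hypothesis HU : forall al, free_nbhd_one tau (U al).
Hypothesis HUmono : forall al be, (forall n, (al n <= be n)%nat) -> subset (U be) (U al).

Definition captured (sg : list nat) (a : X) : Prop :=
  exists m, forall be, extends sg be -> U be (conj_ldiv p a (s m)).

Lemma captured_prefix (al : nat -> nat) (a : X) : exists k, captured (prefix al k) a.
Proof.
  destruct (G_base_diagonal U (fun m => conj_ldiv p a (s m)) HUmono
    (fun be => free_nbhd_one_conj_ldiv Hconv (HU be) a) al) as [k Hk].
  exists k, k. exact Hk.
Qed.

Lemma exists_captured_sequence (A : X -> Prop) : ~ countable A ->
  exists (b : nat -> X) (m : nat -> nat), (forall n, A (b n)) /\
    (forall i j, b i = b j -> i = j) /\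
    forall al, exists n, U al (conj_ldiv p (b n) (s (m n))).
Proof.
  intro HA.
  set (big := fun sg => ~ countable (fun a => A a /\ captured sg a)).
  assert (Hbig : forall al, exists k, big (prefix al k)).
  { intro al. apply NNPP. intro Hno. apply HA.
    apply countable_cover with (P := fun k a => A a /\ captured (prefix al k) a).
    - intro k. apply NNPP. intro Hk. apply Hno. exists k. exact Hk.
    - intros a Ha. destruct (captured_prefix al a) as [k Hk]. exists k. auto. }
  destruct (exists_enumeration_list_nat big) as [e [He Hsurj]].
  { destruct (Hbig (fun _ => 0%nat)) as [k Hk]. eauto. }
  destruct (exists_injective_choice (fun n a => A a /\ captured (e n) a) He)
    as [b [Hb Hinj]].
  destruct (choice (fun n m => forall be, extends (e n) be -> U be (conj_ldiv p (b n) (s m))))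
    as [m Hm].
  { intro n. apply Hb. }
  exists b, m. split; [intro n; apply Hb|]. split; [exact Hinj|].
  intro al. destruct (Hbig al) as [k Hk]. destruct (Hsurj _ Hk) as [n En].
  exists n. apply Hm. rewrite En. apply extends_prefix. reflexivity.
Qed.

End CapturedSequence.

Lemma exists_free_nbhd_one_avoiding (X : Type) (tau : (X -> Prop) -> Prop)
    (s : nat -> X) (p : X) (b : nat -> X) (m : nat -> nat) :
  is_topology tau -> tychonoff tau -> collectionwise_normal tau ->
  (forall n, s n <> p) -> converges tau s p ->
  (forall n, ~ seq_and_limit s p (b n)) -> discrete_family tau (fun n x => x = b n) ->
  exists V, free_nbhd_one tau V /\ forall n, ~ V (conj_ldiv p (b n) (s (m n))).
Proof.
  intros Htop Hty Hcwn Hsp Hconv HbS Hdisc.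
  destruct (exists_continuous_zero_at_limit s Htop Hty Hsp) as [t [Ht [Htp Hts]]].
  destruct (exists_continuous_interpolation Htop Hty b (fun n => / t (s (m n)))
              (seq_and_limit s p) Hcwn (closed_seq_and_limit Htop Hty Hconv) HbS Hdisc)
    as [u [Hu [HuS Hub]]].
  exists (fun g => Rabs (h3 (free_val (fun x => (t x, u x, 0)) g)) < 1). split.
  - apply free_nbhd_one_h3; [exact Htop | exact Ht | exact Hu |].
    exact (continuous_real_const Htop 0).
  - intros n HV.
    rewrite h3_free_val_conj_ldiv, Htp, Hub, Rminus_0_r, Rinv_r, Rabs_R1 in HV.
    + lra.
    + exact (Rgt_not_eq _ _ (Hts (m n))).
    + apply HuS. left. reflexivity.
    + apply HuS. right. eauto.
Qed.

Theorem theorem4p10 (X : Type) (tau : (X -> Prop) -> Prop) :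
  is_topology tau ->
  tychonoff tau ->
  collectionwise_normal tau ->
  has_nontrivial_convergent_seq tau ->
  free_group_has_G_base tau ->
  aleph1_compact tau.
Proof.
  intros Htop Hty Hcwn [s [p [_ [Hsp Hconv]]]] [U [HU [HUmono Hbase]]] A HA.
  apply NNPP. intro Hacc.
  set (A' := fun x => A x /\ ~ seq_and_limit s p x).
  assert (HA' : ~ countable A').
  { apply uncountable_diff; [exact HA|]. apply countable_seq_and_limit. }
  destruct (exists_captured_sequence Hconv U HU HUmono HA') as [b [m [HbA [Hinj Hcap]]]].
  destruct (@exists_free_nbhd_one_avoiding _ _ s p b m Htop Hty Hcwn Hsp Hconv)
    as [V [HV HVb]].
  - intro n. apply HbA.
  - apply (discrete_family_points tau A b); [|intro n; apply HbA|exact Hinj].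
    exact (isolated_of_no_accumulation Hacc).
  - destruct (Hbase V HV) as [al Hal]. destruct (Hcap al) as [n Hn].
    exact (HVb n (Hal _ Hn)).
Qed.
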